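(* Let $p$ be an odd prime, $q=p^m$, and let $D$ be the set of all nonzero squares in $\mathrm{GF}(q)$. If $m$ is odd, then $\mathcal{C}_D$ is a one-weight code over $\mathrm{GF}(p)$ with parameters $[(q-1)/2,\ m,\ (p-1)q/(2p)]$. If $m$ is even, then $\mathcal{C}_D$ is a two-weight code over $\mathrm{GF}(p)$ with parameters $[(q-1)/2,\ m,\ (p-1)(q-\sqrt q)/(2p)]$ and weight enumerator $1+\frac{q-1}{2}z^{(p-1)(q-\sqrt q)/(2p)}+\frac{q-1}{2}z^{(p-1)(q+\sqrt q)/(2p)}$.
   Context: $\mathrm{Tr}$ denotes the absolute trace from $\mathrm{GF}(q)$ onto $\mathrm{GF}(p)$. For a subset $D=\{d_1,\dots,d_n\}\subseteq\mathrm{GF}(q)$ (listed in a fixed order), $\mathcal{C}_D=\{(\mathrm{Tr}(xd_1),\dots,\mathrm{Tr}(xd_n)) : x\in\mathrm{GF}(q)\}$, a linear code of length $n$ over $\mathrm{GF}(p)$. The weight enumerator of a code of length $n$ is $\sum_{i=0}^n A_iz^i$ where $A_i$ is the number of codewords of Hamming weight $i$; a $t$-weight code is one with exactly $t$ distinct nonzero weights. *)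

From HB Require Import structures.
From mathcomp Require Import all_boot all_order all_algebra all_field.
Set Implicit Arguments. Unset Strict Implicit. Unset Printing Implicit Defensive.
Import GRing.Theory.
Local Open Scope ring_scope.

Definition abs_trace (F : finFieldType) (p m : nat) (x : F) : F :=
  \sum_(i < m) x ^+ (p ^ i).

Definition nzsquares (F : finFieldType) : {set F} :=
  [set x : F | (x != 0) && [exists y : F, y ^+ 2 == x]].

(* The codeword (Tr(x d))_{d in D}, encoded as a function F -> F that is
   zero outside D (coordinates indexed by the elements of D). *)
Definition codeword (F : finFieldType) (p m : nat) (D : {set F}) (x : F)
  : {ffun F -> F} :=
  [ffun d => if d \in D then abs_trace p m (x * d) else 0].

Definition code_D (F : finFieldType) (p m : nat) (D : {set F})
  : {set {ffun F -> F}} :=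
  [set codeword p m D x | x : F].

Definition hweight (F : finFieldType) (D : {set F}) (c : {ffun F -> F}) : nat :=
  #|[set d in D | c d != 0]|.

Definition wcount (F : finFieldType) (D : {set F}) (C : {set {ffun F -> F}})
  (i : nat) : nat :=
  #|[set c in C | hweight D c == i]|.

Definition nz_weights (F : finFieldType) (D : {set F}) (C : {set {ffun F -> F}})
  : pred nat := fun w => [exists c in C, (c != 0) && (hweight D c == w)].

From HB Require Import structures.
From mathcomp Require Import all_boot all_order all_algebra all_field.
From mathcomp Require Import ring zify.
Set Implicit Arguments. Unset Strict Implicit. Unset Printing Implicit Defensive.
Import GRing.Theory.
Local Open Scope ring_scope.

(* The codeword of x has weight #{d in D : Tr(x d) <> 0}; since every nonzero
   square has two square roots, this is (q - N(x))/2 with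
   N(x) = #{y : Tr(x y^2) = 0}.  N is constant on each of the two square
   classes of GF(q)^*, invariant under multiplication of x by GF(p)^*, and its
   sum over x <> 0 is (q - 1) q/p.
   If m is odd, GF(p)^* contains a nonsquare of GF(q), so N(x) = q/p for all
   x <> 0.  If m is even, GF(p)^* consists of squares, so the counts
   N_c(x) = #{y : Tr(x y^2) = c} agree for all c in GF(p)^*.  The moments
   sum_c N_c(x) = q and sum_c N_c(x)^2 = q + (q - 1) q/p (count the solutions
   of Tr(x (y^2 - z^2)) = 0 through y^2 - z^2 = (y - z)(y + z)) then give
   (p N(x) - q)^2 = (p - 1)^2 q, and the average of N forces the two square
   classes to take opposite signs. *)

Section Counting.
Variables T U : finType.

Lemma sum_card_swap (R : T -> U -> bool) :
  (\sum_x #|[set y | R x y]| = \sum_y #|[set x | R x y]|)%N.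
Proof.
under eq_bigr do rewrite -sum1dep_card big_mkcond.
rewrite exchange_big; apply: eq_bigr => y _.
by rewrite -sum1dep_card [RHS]big_mkcond.
Qed.

Lemma card_rel (R : T -> U -> bool) :
  #|[set u : T * U | R u.1 u.2]| = (\sum_x #|[set y | R x y]|)%N.
Proof.
rewrite -sum1dep_card -(pair_big_dep xpredT R (fun _ _ => 1%N)) /=.
by apply: eq_bigr => x _; rewrite sum1dep_card.
Qed.

Lemma sum_card_fibers (f : T -> U) (B : {set U}) (A : {set T}) :
  (forall x, f x \in B) -> (\sum_(c in B) #|[set x in A | f x == c]| = #|A|)%N.
Proof.
move=> fB; rewrite -sum1_card (partition_big f (mem B)) //=.
by apply: eq_bigr => c _; rewrite -sum1dep_card; apply: eq_bigl.
Qed.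

End Counting.

Section FiniteFieldRoots.
Variable F : finFieldType.

Lemma card_lt_size_poly (P : {poly F}) (A : {set F}) :
  P != 0 -> {in A, forall x, root P x} -> (#|A| < size P)%N.
Proof.
move=> P0 PA; rewrite cardE max_poly_roots ?enum_uniq //.
by apply/allP => x; rewrite mem_enum => /PA.
Qed.

Lemma card_expf_eq1_le n : (0 < n)%N -> (#|[set x : F | x ^+ n == 1%R]| <= n)%N.
Proof.
move=> n_gt0; rewrite -ltnS -(size_XnsubC (1 : F) n_gt0); apply: card_lt_size_poly.
- by rewrite -size_poly_eq0 size_XnsubC.
- by move=> x; rewrite inE /root !hornerE subr_eq0.
Qed.

Lemma card_nonzero : #|[set x : F | x != 0]| = #|F|.-1.
Proof. by rewrite -(cardsC1 (0 : F)); apply: eq_card => x; rewrite !inE. Qed.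

Lemma expf_card_pred (x : F) : x != 0 -> x ^+ #|F|.-1 = 1.
Proof.
move=> x0; apply: (mulfI x0); rewrite -exprS prednK ?expf_card ?mulr1 //.
exact: ltn_trans (finNzRing_gt1 F).
Qed.

End FiniteFieldRoots.

Section AbsoluteTrace.
Variables (F : finFieldType) (p m : nat).
Hypotheses (pF : p \in [pchar F]) (cardF : #|F| = (p ^ m)%N).

Local Notation q := (p ^ m)%N.
Local Notation Tr := (@abs_trace F p m).

Let p_gt1 : (1 < p)%N := prime_gt1 (pcharf_prime pF).

Lemma exprD_pchar_pow i (x y : F) :
  (x + y) ^+ (p ^ i) = x ^+ (p ^ i) + y ^+ (p ^ i).
Proof.
apply: exprDn_pchar; rewrite pnatX (eq_pnat _ (pcharf_eq pF)).
by rewrite pnat_id ?(pcharf_prime pF).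
Qed.

Lemma abs_traceD x y : Tr (x + y) = Tr x + Tr y.
Proof.
by rewrite /abs_trace -big_split; apply: eq_bigr => i _; rewrite exprD_pchar_pow.
Qed.

Lemma abs_trace0 : Tr 0 = 0.
Proof. by apply: (addrI (Tr 0)); rewrite -abs_traceD !addr0. Qed.

Lemma abs_traceB x y : Tr (x - y) = Tr x - Tr y.
Proof.
by apply: (addrI (Tr y)); rewrite -abs_traceD addrC subrK addrC subrK.
Qed.

Definition prime_subfield : {set F} := [set c | c ^+ p == c].
Local Notation P := prime_subfield.

Lemma prime_subfield_exp c i : c \in P -> c ^+ (p ^ i) = c.
Proof.
rewrite inE => /eqP cp; elim: i => [|i IHi]; first by rewrite expr1.
by rewrite expnSr exprM IHi.
Qed.

Lemma prime_subfield_div c d : c \in P -> d \in P -> c / d \in P.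
Proof. by rewrite !inE exprMn exprVn => /eqP-> /eqP->. Qed.

Lemma natr_prime_subfield k : k%:R \in P.
Proof. by rewrite inE -pFrobenius_autE pFrobenius_aut_nat. Qed.

Lemma natr_ord_inj : injective (fun k : 'I_p => k%:R : F).
Proof.
suff le_natr (i j : 'I_p) : i%:R = j%:R :> F -> (i <= j)%N.
  move=> i j eij; apply/val_inj/eqP.
  by rewrite eqn_leq (le_natr _ _ eij) (le_natr _ _ (esym eij)).
move=> eij; rewrite leqNgt; apply/negP => ji.
have p_dvd : (p %| i - j)%N by rewrite (dvdn_pcharf pF) (natrB _ (ltnW ji)) eij subrr.
have := dvdn_leq (_ : 0 < i - j)%N p_dvd; rewrite subn_gt0 => /(_ ji).
by rewrite leqNgt (leq_ltn_trans (leq_subr j i)).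
Qed.

Lemma card_prime_subfield : #|P| = p.
Proof.
apply/eqP; rewrite eqn_leq; apply/andP; split.
  have size_Xp_X : size ('X^p - 'X : {poly F}) = p.+1.
    by rewrite size_polyDl size_polyXn // size_polyN size_polyX ltnS.
  rewrite -ltnS -size_Xp_X; apply: card_lt_size_poly.
    by rewrite -size_poly_eq0 size_Xp_X.
  by move=> x; rewrite inE /root !hornerE subr_eq0.
rewrite -[X in (X <= _)%N]card_ord -(card_imset _ natr_ord_inj).
by apply/subset_leq_card/subsetP => _ /imsetP [k _ ->]; apply: natr_prime_subfield.
Qed.

Lemma abs_traceZ c x : c \in P -> Tr (c * x) = c * Tr x.
Proof.
move=> cP; rewrite /abs_trace mulr_sumr; apply: eq_bigr => i _.
by rewrite exprMn prime_subfield_exp.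
Qed.

Lemma abs_trace_prime_subfield x : Tr x \in P.
Proof.
rewrite inE -(pFrobenius_autE pF) rmorph_sum /=; apply/eqP.
under eq_bigr do rewrite pFrobenius_autE -exprM -expnSr.
rewrite /abs_trace; case: m cardF => [|n] cF; first by rewrite !big_ord0.
by rewrite big_ord_recr big_ord_recl /= -cF expf_card expn0 expr1 addrC.
Qed.

Lemma size_abs_trace_poly n :
  size (\sum_(i < n.+1) 'X^(p ^ i) : {poly F}) = (p ^ n).+1.
Proof.
elim: n => [|n IHn]; first by rewrite big_ord1 expn0 size_polyXn.
rewrite big_ord_recr /= addrC size_polyDl size_polyXn // IHn ltnS.
by rewrite ltn_exp2l.
Qed.

Lemma abs_trace_neq0 : exists z, Tr z != 0.
Proof.
apply/existsP; apply: contraT; rewrite negb_exists => /forallP Tr0.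
case: m cardF Tr0 => [|n] cF Tr0; first by have := finNzRing_gt1 F; rewrite cF.
suff : (#|F| < (p ^ n).+1)%N by rewrite cF ltnS leqNgt ltn_exp2l // ltnSn.
rewrite -cardsT -size_abs_trace_poly; apply: card_lt_size_poly.
  by rewrite -size_poly_eq0 size_abs_trace_poly.
move=> x _; rewrite /root horner_sum; under eq_bigr do rewrite hornerXn.
exact: negbNE (Tr0 x).
Qed.

Local Notation K := #|[set v : F | Tr v == 0]|.

Lemma card_abs_trace_fiber c : c \in P -> #|[set v : F | Tr v == c]| = K.
Proof.
move=> cP; have [z Tz] := abs_trace_neq0.
have tP : c / Tr z \in P by rewrite prime_subfield_div ?abs_trace_prime_subfield.
rewrite -(card_preimset _ (addIr (c / Tr z * z))); apply: eq_card => v.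
by rewrite !inE abs_traceD abs_traceZ // divfK // -subr_eq0 addrK.
Qed.

Lemma card_abs_trace_kernel : (p * K = q)%N.
Proof.
rewrite -cardF -cardsT -(sum_card_fibers [set: F] abs_trace_prime_subfield).
rewrite -[X in (X * _)%N]card_prime_subfield -sum_nat_const; apply: eq_bigr => c cP.
by rewrite -(card_abs_trace_fiber cP); apply: eq_card => v; rewrite !inE.
Qed.

Lemma card_abs_trace_kernelZ c : c != 0 -> #|[set v : F | Tr (c * v) == 0]| = K.
Proof.
by move=> c0; rewrite -[RHS](card_preimset _ (mulfI c0)); apply: eq_card => v; rewrite !inE.
Qed.

End AbsoluteTrace.

Section Squares.
Variable F : finFieldType.
Hypothesis two_neq0 : 2%:R != 0 :> F.
Local Notation S := (nzsquares F).

Lemma nzsquaresP x : reflect (exists2 t, t != 0 & x = t ^+ 2) (x \in S).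
Proof.
rewrite inE; apply: (iffP andP) => [[x0 /existsP [t /eqP tx]] | [t t0 ->]].
  by exists t => //; apply: contra_neq x0 => t0; rewrite -tx t0 expr0n.
by rewrite expf_neq0 //; split => //; apply/existsP; exists t.
Qed.

Lemma one_nzsquares : 1 \in S.
Proof. by apply/nzsquaresP; exists 1; rewrite ?oner_neq0 ?expr1n. Qed.

Lemma nzsquares_neq0 x : x \in S -> x != 0.
Proof. by rewrite inE => /andP []. Qed.

Lemma card_sqrt d : d \in S -> #|[set y : F | y ^+ 2 == d]| = 2%N.
Proof.
case/nzsquaresP => t t0 ->.
have -> : [set y : F | y ^+ 2 == t ^+ 2] = [set t; - t].
  by apply/setP => y; rewrite !inE eqf_sqr.
by rewrite cards2 -addr_eq0 -mulr2n -(mulr_natr t) mulf_neq0.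
Qed.

Lemma card_sqr_preim (Q : pred F) :
  #|[set y : F | (y != 0) && Q (y ^+ 2)]| = (2 * #|[set d in S | Q d]|)%N.
Proof.
rewrite -[LHS]sum1dep_card (partition_big (fun y => y ^+ 2) (mem [set d in S | Q d])) /=.
  rewrite mulnC -sum_nat_const; apply: eq_bigr => d; rewrite inE => /andP [dS Qd].
  rewrite sum1dep_card -[RHS](card_sqrt dS); apply: eq_card => y; rewrite !inE.
  have [yd|] := eqVneq (y ^+ 2) d; rewrite ?andbF // yd Qd !andbT.
  by apply: contra_neq (nzsquares_neq0 dS) => y0; rewrite -yd y0 expr0n.
move=> y /andP [y0 Qy]; rewrite inE Qy andbT.
by apply/nzsquaresP; exists y.
Qed.

Lemma double_card_nzsquares : (2 * #|S| = #|F|.-1)%N.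
Proof.
rewrite -card_nonzero; transitivity #|[set y : F | (y != 0) && predT (y ^+ 2)]|.
  by rewrite card_sqr_preim; congr (2 * _)%N; apply: eq_card => d; rewrite !inE andbT.
by apply: eq_card => y; rewrite !inE andbT.
Qed.

Lemma nzsquares_expr x : x \in S -> x ^+ #|S| = 1.
Proof.
case/nzsquaresP => t t0 ->.
by rewrite -exprM double_card_nzsquares expf_card_pred.
Qed.

Lemma euler_criterion x : x != 0 -> (x \in S) = (x ^+ #|S| == 1).
Proof.
move=> x0; apply/idP/idP => [/nzsquares_expr -> // | xS1].
apply: contraT => xS; have S_gt0 : (0 < #|S|)%N.
  by apply/card_gt0P; exists 1; apply: one_nzsquares.
suff : (#|S| < #|[set y : F | y ^+ #|S| == 1%R]|)%N.
  by rewrite ltnNge card_expf_eq1_le.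
rewrite (leq_trans _ (subset_leq_card (_ : x |: S \subset _))) ?cardsU1 ?xS //.
by apply/subsetP => y /setU1P [-> | /nzsquares_expr yS1]; rewrite inE ?yS1.
Qed.

Lemma nonsquare_expr x : x != 0 -> x \notin S -> x ^+ #|S| = -1.
Proof.
move=> x0 xS; have := expf_card_pred x0.
rewrite -double_card_nzsquares mulnC exprM => /eqP; rewrite sqrf_eq1.
by rewrite -euler_criterion // (negbTE xS) => /eqP.
Qed.

Lemma mul_nonsquares x y : x != 0 -> y != 0 -> x \notin S -> y \notin S ->
  x * y \in S.
Proof.
move=> x0 y0 xS yS; rewrite euler_criterion ?mulf_neq0 //.
by rewrite exprMn !nonsquare_expr // mulrNN mulr1.
Qed.

Lemma card_nonsquares : #|[set x : F | (x != 0) && (x \notin S)]| = #|S|.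
Proof.
apply: (@addnI #|S|); rewrite addnn -mul2n double_card_nzsquares -card_nonzero.
rewrite -(cardsID S [set x : F | x != 0]) (setIidPr _); last first.
  by apply/subsetP => x /nzsquares_neq0; rewrite inE.
by congr (_ + _)%N; apply: eq_card => x; rewrite !inE andbC.
Qed.

Lemma card_square_class b : #|[set x : F | (x != 0) && ((x \in S) == b)]| = #|S|.
Proof.
case: b; last first.
  by rewrite -card_nonsquares; apply: eq_card => x; rewrite !inE eqbF_neg.
apply: eq_card => x; rewrite [in LHS]inE eqb_id.
by case: (boolP (x \in S)) => [/nzsquares_neq0 ->|]; rewrite ?andbF.
Qed.

Section TwoClassWeights.
Variables (b : bool) (w1 w2 : nat) (wt : F -> nat).
Hypotheses (wt0 : wt 0 = 0%N) (w1_gt0 : (0 < w1)%N) (lt_w12 : (w1 < w2)%N).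
Hypothesis wtE : forall x, x != 0 -> wt x = if (x \in S) == b then w1 else w2.

Let wt_classE x : wt x = if x == 0 then 0%N else if (x \in S) == b then w1 else w2.
Proof. by case: eqVneq => [->|/wtE]. Qed.

Lemma card_two_class_fiber i : #|[set x | wt x == i]| =
  if i == 0%N then 1%N else if i == w1 then #|S| else if i == w2 then #|S| else 0%N.
Proof.
have w2_gt0 := ltn_trans w1_gt0 lt_w12.
have [->|i0] := eqVneq i 0%N.
  rewrite -(cards1 (0 : F)); apply: eq_card => x; rewrite !inE wt_classE.
  by case: (x == 0) => //; case: ifP => _; rewrite gtn_eqF.
have [->|iw1] := eqVneq i w1.
  rewrite -(card_square_class b); apply: eq_card => x.
  rewrite [in LHS]inE [in RHS]inE wt_classE.
  case: (x == 0); first by rewrite eq_sym gtn_eqF.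
  by case: ((x \in S) == b); rewrite ?eqxx ?gtn_eqF.
have [->|iw2] := eqVneq i w2.
  rewrite -(card_square_class (~~ b)); apply: eq_card => x.
  rewrite [in LHS]inE [in RHS]inE wt_classE.
  case: (x == 0); first by rewrite eq_sym gtn_eqF.
  by case: (x \in S); case: b; rewrite ?eqxx ?ltn_eqF.
apply: eq_card0 => x; rewrite !inE wt_classE.
by case: (x == 0); [|case: ifP => _]; rewrite eq_sym ?(negbTE i0) ?(negbTE iw1) ?(negbTE iw2).
Qed.

Lemma two_class_nz_weights w :
  [exists x, (x != 0) && (wt x == w)] = (w \in [:: w1; w2]).
Proof.
have class_elt c : exists2 x : F, x != 0 & (x \in S) = c.
  have /card_gt0P [x] : (0 < #|[set x : F | (x != 0%R) && ((x \in S) == c)]|)%N.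
    by rewrite card_square_class; apply/card_gt0P; exists 1; apply: one_nzsquares.
  by rewrite in_set => /andP [x0 /eqP xc]; exists x.
apply/existsP/idP => [[x /andP [x0 /eqP <-]] | ].
  by rewrite wtE // !inE; case: ifP; rewrite eqxx ?orbT.
have [[y y0 yb] [z z0 zb]] := (class_elt b, class_elt (~~ b)).
rewrite !inE => /orP [] /eqP ->; [exists y | exists z]; rewrite ?y0 ?z0 wtE //.
  by rewrite yb !eqxx.
by rewrite zb; case: b {yb zb}; rewrite eqxx.
Qed.

End TwoClassWeights.

End Squares.

Lemma odd_sum_expn p m : odd p -> odd (\sum_(i < m) p ^ i) = odd m.
Proof.
move=> p_odd; elim: m => [|m IHm]; first by rewrite big_ord0.
by rewrite big_ord_recr /= oddD IHm oddX p_odd orbT addbT.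
Qed.

Section PrimeSubfieldSquares.
Variables (F : finFieldType) (p m : nat).
Hypotheses (pF : p \in [pchar F]) (p_odd : odd p) (cardF : #|F| = (p ^ m)%N).

Local Notation S := (nzsquares F).
Local Notation P := (prime_subfield F p).
Local Notation G := (\sum_(i < m) p ^ i)%N.

Lemma two_neq0_pchar : 2%:R != 0 :> F.
Proof.
rewrite -(dvdn_pcharf pF) dvdn_prime2 ?(pcharf_prime pF) //.
by apply: contraL p_odd => /eqP ->.
Qed.

Lemma card_nzsquares_sum_expn : #|S| = (p./2 * G)%N.
Proof.
apply/eqP; rewrite -(eqn_pmul2l (_ : 0 < 2)%N) // double_card_nzsquares.
  by rewrite cardF predn_exp mulnA mul2n odd_halfK.
exact: two_neq0_pchar.
Qed.

Lemma prime_subfield_expr_half c : c \in P -> c != 0 ->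
  c ^+ p./2 = 1 \/ c ^+ p./2 = -1.
Proof.
move=> cP c0; have : (c ^+ p./2) ^+ 2 == 1.
  rewrite -exprM muln2 odd_halfK //; apply/eqP/(mulfI c0).
  rewrite -exprS prednK ?prime_gt0 ?(pcharf_prime pF) // mulr1.
  by apply/eqP; rewrite inE in cP.
by rewrite sqrf_eq1 => /orP [] /eqP; [left | right].
Qed.

Lemma prime_subfield_nzsquares c : ~~ odd m -> c \in P -> c != 0 -> c \in S.
Proof.
move=> m_even cP c0; rewrite euler_criterion ?two_neq0_pchar //.
rewrite card_nzsquares_sum_expn exprM -(even_halfK (_ : ~~ odd G)); last first.
  by rewrite odd_sum_expn.
by rewrite -mul2n exprM; case: (prime_subfield_expr_half cP c0) => ->;
  rewrite ?sqrrN !expr1n.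
Qed.

Lemma exists_prime_subfield_nonsquare : odd m ->
  exists c, [/\ c \in P, c != 0 & c \notin S].
Proof.
move=> m_odd; have p_pos : (0 < p)%N := prime_gt0 (pcharf_prime pF).
have p_half : p = (2 * p./2).+1 by rewrite mul2n odd_halfK // prednK.
have [c /andP [/setD1P [c0 cP] c_half]] : exists c, (c \in P :\ 0%R) && (c ^+ p./2 != 1).
  apply/existsP; apply: contraT; rewrite negb_exists => /forallP half1.
  have half_gt0 : (0 < p./2)%N by rewrite half_gt0 prime_gt1 ?(pcharf_prime pF).
  suff : (p./2 < #|[set x : F | x ^+ p./2 == 1%R]|)%N.
    by rewrite ltnNge card_expf_eq1_le.
  apply: (@leq_trans #|P :\ 0%R|); last first.
    apply/subset_leq_card/subsetP => c cP0.
    by rewrite inE; move: (half1 c); rewrite cP0 negbK.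
  have card_P0 : #|P :\ 0%R| = p.-1.
    have := cardsD1 0 P; rewrite (card_prime_subfield pF) inE expr0n gtn_eqF //.
    by rewrite eqxx => e; rewrite [in RHS]e add1n.
  rewrite card_P0; lia.
exists c; split => //; rewrite euler_criterion ?two_neq0_pchar //.
rewrite card_nzsquares_sum_expn exprM.
have [c_half1 | ->] := prime_subfield_expr_half cP c0; first by rewrite c_half1 eqxx in c_half.
rewrite -signr_odd (odd_sum_expn _ p_odd) m_odd expr1 eq_sym -addr_eq0.
exact: two_neq0_pchar.
Qed.

End PrimeSubfieldSquares.

(* [a] together with [n] copies of [b] has total [q] and sum of squares
   [q + (q - 1) k]. *)
Lemma moments_sqr (R : comPzRingType) (n q a b k : R) :
  a + n * b = q -> a ^+ 2 + n * b ^+ 2 = q + (q - 1) * k -> (n + 1) * k = q ->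
  ((n + 1) * a - q) ^+ 2 = n ^+ 2 * q.
Proof.
move=> <- e2 e3.
have var_ab : n * (a - b) ^+ 2 = n * (a + n * b).
  transitivity ((n + 1) * (a ^+ 2 + n * b ^+ 2) - (a + n * b) ^+ 2); first by ring.
  rewrite e2; transitivity ((n + 1) * (a + n * b) + (a + n * b - 1) * ((n + 1) * k)
    - (a + n * b) ^+ 2); first by ring.
  by rewrite e3; ring.
by transitivity (n * (n * (a - b) ^+ 2)); [ring | rewrite var_ab; ring].
Qed.

Section TraceOfSquares.
Variables (F : finFieldType) (p m : nat).
Hypotheses (pF : p \in [pchar F]) (p_odd : odd p) (cardF : #|F| = (p ^ m)%N).

Local Notation q := (p ^ m)%N.
Local Notation Tr := (@abs_trace F p m).
Local Notation S := (nzsquares F).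
Local Notation P := (prime_subfield F p).
Local Notation K := #|[set v : F | Tr v == 0]|.

Let two_neq0 := two_neq0_pchar pF p_odd.

Definition trsq_count (x c : F) := #|[set y : F | Tr (x * y ^+ 2) == c]|.

Lemma card_nzsquares_trace (x : F) :
  (2 * #|[set d in S | Tr (x * d)%R != 0%R]| + trsq_count x 0%R = q)%N.
Proof.
rewrite -card_sqr_preim // -cardF -(cardsC [set y : F | Tr (x * y ^+ 2) == 0]) addnC.
congr (_ + _)%N; apply: eq_card => y; rewrite !inE.
by have [->|] := eqVneq y 0; rewrite ?expr0n ?mulr0 ?(abs_trace0 _ pF) ?eqxx.
Qed.

Lemma trsq_countZsqr (x c t : F) : t != 0 -> trsq_count (t ^+ 2 * x) c = trsq_count x c.
Proof.
move=> t0; rewrite /trsq_count -[RHS](card_preimset _ (mulfI t0)).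
by apply: eq_card => y; rewrite !inE exprMn; congr (Tr _ == c); ring.
Qed.

Lemma trsq_count_nzsquares_mul (x y c : F) :
  x != 0 -> x * y \in S -> trsq_count y c = trsq_count x c.
Proof.
move=> x0 /nzsquaresP [t t0 xy].
have -> : y = (t / x) ^+ 2 * x by rewrite expr_div_n -xy; field.
by rewrite trsq_countZsqr // mulf_neq0 ?invr_neq0.
Qed.

Lemma trsq_count_nzsquares (x c : F) : x \in S -> trsq_count x c = trsq_count 1 c.
Proof. by move=> xS; apply: trsq_count_nzsquares_mul; rewrite ?oner_neq0 ?mul1r. Qed.

Lemma trsq_count_nonsquares (x g c : F) : x != 0 -> g != 0 -> x \notin S -> g \notin S ->
  trsq_count x c = trsq_count g c.
Proof. by move=> x0 g0 xS gS; apply: trsq_count_nzsquares_mul; rewrite ?mul_nonsquares. Qed.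

Lemma trsq_count0Z (x c : F) : c \in P -> c != 0 -> trsq_count (c * x) 0 = trsq_count x 0.
Proof.
move=> cP c0; apply: eq_card => y.
by rewrite !inE -mulrA abs_traceZ // mulf_eq0 (negbTE c0).
Qed.

Lemma trsq_count_prime_subfield (x c : F) :
  c \in P -> c \in S -> trsq_count x c = trsq_count x 1.
Proof.
move=> cP cS; have c0 := nzsquares_neq0 cS; case/nzsquaresP: cS => t t0 ct.
rewrite /trsq_count -[LHS](card_preimset _ (mulfI t0)); apply: eq_card => y.
rewrite !inE.
have -> : x * (t * y) ^+ 2 = c * (x * y ^+ 2) by rewrite ct; ring.
by rewrite abs_traceZ // -[X in _ == X](mulr1 c) (inj_eq (mulfI c0)).
Qed.

Lemma sum_trsq_count0 : (\sum_(x : F | x != 0%R) trsq_count x 0%R = q.-1 * K)%N.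
Proof.
rewrite big_mkcond /=.
transitivity (\sum_(x : F) #|[set y : F | (x != 0%R) && (Tr (x * y ^+ 2)%R == 0%R)]|)%N.
  apply: eq_bigr => x _; have [->|x0] := eqVneq x 0.
    by apply/esym/eq_card0 => y; rewrite !inE.
  by apply: eq_card => y; rewrite !inE.
rewrite sum_card_swap (bigD1 0) //= (eq_bigr (fun _ => K.-1)) => [|y y0].
  have K_gt0 : (0 < K)%N by apply/card_gt0P; exists 0; rewrite inE (abs_trace0 _ pF).
  rewrite sum_nat_cond_const card_nonzero cardF -[in RHS](prednK K_gt0) mulnS.
  congr (_ + _)%N; rewrite -cardF -card_nonzero; apply: eq_card => x.
  by rewrite !inE expr0n /= mulr0 (abs_trace0 _ pF) eqxx andbT.
rewrite -(card_abs_trace_kernelZ p m (expf_neq0 2 y0)) [in RHS](cardsD1 0) inE mulr0.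
by rewrite (abs_trace0 _ pF) eqxx add1n /=; apply: eq_card => x; rewrite !inE mulrC.
Qed.

Lemma sum_trsq_count (x : F) : (\sum_(c in P) trsq_count x c = q)%N.
Proof.
have TrP y := abs_trace_prime_subfield pF cardF (x * y ^+ 2).
rewrite -cardF -cardsT -(sum_card_fibers [set: F] TrP).
by apply: eq_bigr => c _; apply: eq_card => y; rewrite !inE.
Qed.

Lemma card_trsq_eq (x : F) :
  #|[set u : F * F | Tr (x * u.1 ^+ 2) == Tr (x * u.2 ^+ 2)]| =
  #|[set u : F * F | Tr (x * (u.1 * u.2)) == 0]|.
Proof.
pose f (u : F * F) := ((u.1 + u.2) / 2%:R, (u.2 - u.1) / 2%:R).
have fK : cancel f (fun u => (u.1 - u.2, u.1 + u.2)).
  by case=> a b; rewrite /f /=; congr (_, _); field.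
rewrite -(card_preimset _ (can_inj fK)); apply: eq_card => -[a b].
rewrite !inE /f /= -subr_eq0 -abs_traceB //; congr (Tr _ == 0).
by field.
Qed.

Lemma card_trace_mul0 (x : F) : x != 0 ->
  #|[set u : F * F | Tr (x * (u.1 * u.2)) == 0]| = (q + q.-1 * K)%N.
Proof.
move=> x0; rewrite (card_rel (fun a b => Tr (x * (a * b)) == 0)) (bigD1 0) //=.
congr (_ + _)%N.
  rewrite -cardF -cardsT; apply: eq_card => y.
  by rewrite !inE mul0r mulr0 (abs_trace0 _ pF) eqxx.
rewrite -cardF -card_nonzero -sum_nat_cond_const; apply: eq_bigr => a a0.
rewrite -(card_abs_trace_kernelZ p m (mulf_neq0 x0 a0)).
by apply: eq_card => b; rewrite !inE mulrA.
Qed.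

Lemma sum_sqr_trsq_count (x : F) : x != 0 ->
  (\sum_(c in P) trsq_count x c ^ 2 = q + q.-1 * K)%N.
Proof.
move=> x0; rewrite -(card_trace_mul0 x0) -card_trsq_eq.
have TrP (u : F * F) := abs_trace_prime_subfield pF cardF (x * u.1 ^+ 2).
rewrite -(sum_card_fibers _ TrP).
apply: eq_bigr => c _; rewrite -mulnn -cardsX; apply: eq_card => -[y z]; rewrite !inE /=.
by case: (eqVneq (Tr (x * y ^+ 2)) c) => [->|]; rewrite ?andbT ?andbF.
Qed.

Lemma sum_prime_subfield_split (f : F -> nat) :
  (forall c, c \in P -> c != 0 -> f c = f 1) ->
  (\sum_(c in P) f c = f 0%R + p.-1 * f 1%R)%N.
Proof.
have P0 : (0 : F) \in P by rewrite inE expr0n gtn_eqF ?prime_gt0 ?(pcharf_prime pF).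
move=> f1; rewrite (bigD1 0) //=; congr (_ + _)%N.
rewrite (eq_bigr (fun=> f 1)) => [|c /andP [cP c0]]; last exact: f1.
rewrite sum_nat_cond_const; congr (_ * _)%N.
rewrite -[in RHS](card_prime_subfield pF) (cardsD1 0 P) P0 add1n /=.
by apply: eq_card => c; rewrite !inE andbC.
Qed.

Lemma trsq_count0_odd (x : F) : odd m -> x != 0 -> trsq_count x 0 = K.
Proof.
move=> m_odd x0.
have [c [cP c0 cS]] := exists_prime_subfield_nonsquare pF p_odd cardF m_odd.
have trsq_const y : y != 0 -> trsq_count y 0 = trsq_count 1 0.
  move=> y0; have [yS | yS] := boolP (y \in S); first exact: trsq_count_nzsquares.
  by rewrite -(trsq_count0Z y cP c0) trsq_count_nzsquares // mul_nonsquares.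
have q1_gt0 : (0 < q.-1)%N by have := finNzRing_gt1 F; rewrite cardF; lia.
have := sum_trsq_count0; rewrite (eq_bigr (fun=> trsq_count 1 0)) => [|y /trsq_const //].
rewrite sum_nat_cond_const card_nonzero cardF => /eqP; rewrite eqn_pmul2l //.
by move=> /eqP <-; exact: trsq_const.
Qed.

Lemma trsq_count0_even (x : F) : ~~ odd m -> x != 0 ->
  (p * trsq_count x 0%R = q + p.-1 * p ^ (m %/ 2))%N \/
  (p * trsq_count x 0%R + p.-1 * p ^ (m %/ 2) = q)%N.
Proof.
move=> m_even x0; have p_gt0 := prime_gt0 (pcharf_prime pF).
have in_squares c : c \in P -> c != 0 -> trsq_count x c = trsq_count x 1.
  by move=> cP c0; rewrite trsq_count_prime_subfield // (prime_subfield_nzsquares pF p_odd cardF).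
set a := trsq_count x 0; set b := trsq_count x 1; set s := (p ^ (m %/ 2))%N.
have e1 : (a + p.-1 * b = q)%N.
  by rewrite -(sum_trsq_count x) (sum_prime_subfield_split (f := trsq_count x)).
have e2 : (a * a + p.-1 * (b * b) = q + q.-1 * K)%N.
  rewrite -(sum_sqr_trsq_count x0) (sum_prime_subfield_split (f := fun c => trsq_count x c ^ 2)%N).
    by rewrite !mulnn.
  by move=> c cP c0; rewrite in_squares.
have z1 : a%:Z + (p.-1)%:Z * b%:Z = q%:Z by rewrite -PoszM -PoszD e1.
have z2 : a%:Z ^+ 2 + (p.-1)%:Z * b%:Z ^+ 2 = q%:Z + (q%:Z - 1) * K%:Z.
  by rewrite -predn_int ?expn_gt0 ?p_gt0 // !expr2 -!PoszM -!PoszD e2.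
have z3 : ((p.-1)%:Z + 1) * K%:Z = q%:Z.
  by rewrite predn_int // subrK -PoszM card_abs_trace_kernel.
have zs : q%:Z = s%:Z ^+ 2.
  by rewrite expr2 -PoszM mulnn -expnM divnK // dvdn2.
have := moments_sqr z1 z2 z3; rewrite [in RHS]zs -exprMn.
by move=> /eqP; rewrite eqf_sqr => /orP [] /eqP e; [left | right]; lia.
Qed.

Lemma sum_trsq_count0_classes (g : F) : g != 0 -> g \notin S ->
  (trsq_count 1%R 0%R + trsq_count g 0%R = 2 * K)%N.
Proof.
move=> g0 gS; have S_gt0 : (0 < #|S|)%N by apply/card_gt0P; exists 1; apply: one_nzsquares.
have := sum_trsq_count0; rewrite (bigID (mem S)) /=.
rewrite (eq_bigr (fun=> trsq_count 1 0)) => [|x /andP [_ xS]]; last exact: trsq_count_nzsquares.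
rewrite [X in (_ + X)%N](eq_bigr (fun=> trsq_count g 0)) => [|x /andP [x0 xS]]; last first.
  exact: trsq_count_nonsquares.
have cardS0 : #|[set x : F | (x != 0%R) && (x \in S)]| = #|S|.
  apply: eq_card => x; rewrite [in LHS]inE.
  by case: (boolP (x \in S)) => [/nzsquares_neq0 ->|]; rewrite ?andbF.
rewrite !sum_nat_cond_const cardS0 card_nonsquares // -mulnDr -cardF.
rewrite -(double_card_nzsquares two_neq0) -mulnA mulnCA => /eqP.
by rewrite eqn_pmul2l // => /eqP.
Qed.

Lemma trsq_count0_classes : ~~ odd m -> exists b : bool, forall x : F, x != 0 ->
  if (x \in S) == b then (p * trsq_count x 0%R = q + p.-1 * p ^ (m %/ 2))%N
  else (p * trsq_count x 0%R + p.-1 * p ^ (m %/ 2) = q)%N.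
Proof.
move=> m_even.
have /card_gt0P [g] : (0 < #|[set x : F | (x != 0%R) && (x \notin S)]|)%N.
  by rewrite card_nonsquares //; apply/card_gt0P; exists 1; apply: one_nzsquares.
rewrite inE => /andP [g0 gS].
have sum_classes : (p * trsq_count 1%R 0%R + p * trsq_count g 0%R = 2 * q)%N.
  by rewrite -mulnDr sum_trsq_count0_classes // mulnCA (card_abs_trace_kernel pF cardF).
have s_pos : (0 < p.-1 * p ^ (m %/ 2))%N.
  by rewrite muln_gt0 expn_gt0; have := prime_gt1 (pcharf_prime pF); lia.
have [eS|eS] := trsq_count0_even m_even (oner_neq0 F);
  have [eN|eN] := trsq_count0_even m_even g0.
- by move: sum_classes; rewrite eS eN; lia.
- exists true => x x0; case: (boolP (x \in S)) => xS /=.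
    by rewrite trsq_count_nzsquares.
  by rewrite (trsq_count_nonsquares _ x0 g0).
- exists false => x x0; case: (boolP (x \in S)) => xS /=.
    by rewrite trsq_count_nzsquares.
  by rewrite (trsq_count_nonsquares _ x0 g0).
- by have := congr2 addn eS eN; rewrite addnACA sum_classes; lia.
Qed.

End TraceOfSquares.

Section Code.
Variables (F : finFieldType) (p m : nat) (D : {set F}).
Hypothesis pF : p \in [pchar F].

Local Notation wt x := (hweight D (codeword p m D x)).
Local Notation C := (code_D p m D).

Lemma hweight_codeword x : wt x = #|[set d in D | abs_trace p m (x * d) != 0]|.
Proof. by apply: eq_card => d; rewrite !inE ffunE; case: (d \in D). Qed.

Lemma codeword0 : codeword p m D 0 = 0.
Proof. by apply/ffunP => d; rewrite !ffunE mul0r abs_trace0 // if_same. Qed.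

Lemma hweight0 : wt 0 = 0%N.
Proof. by rewrite codeword0; apply: eq_card0 => d; rewrite !inE ffunE eqxx andbF. Qed.

Hypothesis wt_gt0 : forall x, x != 0 -> (0 < wt x)%N.

Lemma codeword_eq0 x : (codeword p m D x == 0) = (x == 0).
Proof.
apply/eqP/eqP => [cx0|->]; last exact: codeword0.
apply/eqP; apply: contraT => /wt_gt0; rewrite cx0 => /card_gt0P [d].
by rewrite inE ffunE eqxx andbF.
Qed.

Lemma codeword_inj : injective (codeword p m D).
Proof.
move=> x y exy; apply/eqP; rewrite -subr_eq0 -codeword_eq0; apply/eqP/ffunP => d.
have := congr1 (fun c : {ffun F -> F} => c d) exy; rewrite !ffunE /=.
by case: (d \in D) => // e; rewrite mulrBl abs_traceB // e subrr.
Qed.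

Lemma card_code_D : #|C| = #|F|.
Proof. by rewrite card_imset ?cardsT //; apply: codeword_inj. Qed.

Lemma wcount_code_D i : wcount D C i = #|[set x : F | wt x == i]|.
Proof.
rewrite /wcount -(card_imset _ codeword_inj); apply: eq_card => c; rewrite inE.
apply/andP/imsetP => [[/imsetP [x _ ->] wx] | [x wx ->]].
  by exists x => //; rewrite inE.
by split; [apply: imset_f | rewrite inE in wx].
Qed.

Lemma nz_weights_code_D w :
  (w \in nz_weights D C) = [exists x : F, (x != 0) && (wt x == w)].
Proof.
rewrite unfold_in /nz_weights.
apply/existsP/existsP => [[c /andP [/imsetP [x _ ->]]] | [x]].
  by rewrite codeword_eq0 => wx; exists x.
by rewrite -codeword_eq0 => wx; exists (codeword p m D x); rewrite imset_f.
Qed.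

End Code.

Lemma divnK_weight p t : odd p -> (p %| t)%N ->
  (2 * p * ((p - 1) * t %/ (2 * p)) = (p - 1) * t)%N.
Proof.
move=> p_odd p_t; rewrite mulnC divnK // dvdn_mul // dvdn2 oddB ?odd_gt0 //.
by rewrite p_odd.
Qed.

Section EvenWeights.
Variables p m : nat.
Hypotheses (p_prime : prime p) (p_odd : odd p) (m_gt0 : (0 < m)%N) (m_even : ~~ odd m).

Local Notation q := (p ^ m)%N.
Local Notation s := (p ^ (m %/ 2))%N.

Lemma dvdn_exp_half : (p %| s)%N.
Proof.
have m_ge2 : (1 < m)%N by case: m m_gt0 m_even => [|[|]].
by rewrite dvdn_exp // divn_gt0.
Qed.

Lemma exp_half_lt : (s < q)%N.
Proof. by rewrite ltn_exp2l ?prime_gt1 // ltn_Pdiv. Qed.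

Lemma even_weights_lt :
  (0 < (p - 1) * (q - s) %/ (2 * p) < (p - 1) * (q + s) %/ (2 * p))%N.
Proof.
have p_gt1 := prime_gt1 p_prime; have s_lt_q := exp_half_lt.
have s_gt0 : (0 < s)%N by rewrite expn_gt0 (ltnW p_gt1).
have pos2p : (0 < 2 * p)%N by rewrite muln_gt0 (ltnW p_gt1).
have p_q : (p %| q)%N by rewrite dvdn_exp.
apply/andP; split; rewrite -(ltn_pmul2l pos2p) ?muln0 !divnK_weight
  ?dvdn_sub ?dvdn_add ?dvdn_exp_half //.
  by rewrite muln_gt0 !subn_gt0 p_gt1.
by rewrite ltn_pmul2l ?subn_gt0 //; lia.
Qed.

End EvenWeights.

Section CodeOfSquares.
Variables (F : finFieldType) (p m : nat).
Hypotheses (pF : p \in [pchar F]) (p_odd : odd p) (m_gt0 : (0 < m)%N).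
Hypothesis cardF : #|F| = (p ^ m)%N.

Local Notation q := (p ^ m)%N.
Local Notation S := (nzsquares F).
Local Notation s := (p ^ (m %/ 2))%N.
Local Notation wt x := (hweight S (codeword p m S x)).
Local Notation w1 := ((p - 1) * (q - s) %/ (2 * p))%N.
Local Notation w2 := ((p - 1) * (q + s) %/ (2 * p))%N.

Let p_prime : prime p := pcharf_prime pF.

(* Covers the cases t = q and t = q -+ s at once. *)
Lemma hweight_trsq_count x t : (p %| t)%N ->
  (p * trsq_count p m x 0%R + (p - 1) * t = p * q)%N -> wt x = ((p - 1) * t %/ (2 * p))%N.
Proof.
move=> p_t e; have := card_nzsquares_trace pF p_odd cardF x; rewrite -hweight_codeword.
move=> /(congr1 (muln p)); rewrite mulnDr -e addnC => /eqP; rewrite eqn_add2l.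
rewrite mulnCA mulnA -[X in _ == X](divnK_weight p_odd p_t) eqn_pmul2l ?muln_gt0 ?prime_gt0 //.
by move/eqP.
Qed.

Lemma hweight_odd x : odd m -> x != 0 -> wt x = ((p - 1) * q %/ (2 * p))%N.
Proof.
move=> m_odd x0; apply: hweight_trsq_count; first by rewrite dvdn_exp.
rewrite (trsq_count0_odd pF p_odd cardF m_odd x0) (card_abs_trace_kernel pF cardF).
by rewrite mulnBl mul1n subnKC // leq_pmull ?prime_gt0.
Qed.

Lemma hweight_even : ~~ odd m ->
  exists b, forall x, x != 0 -> wt x = if (x \in S) == b then w1 else w2.
Proof.
move=> m_even; have [b classes] := trsq_count0_classes pF p_odd cardF m_even.
have p_s := dvdn_exp_half p m_gt0 m_even.
have s_le_q := ltnW (exp_half_lt p_prime m_gt0).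
have p_q : (p %| q)%N by rewrite dvdn_exp.
have pq : (p * q = q + (p - 1) * q)%N.
  by rewrite mulnBl mul1n subnKC // leq_pmull ?prime_gt0.
have ps_le : ((p - 1) * s <= (p - 1) * q)%N by rewrite leq_mul2l s_le_q orbT.
exists b => x x0; have := classes x x0; rewrite -subn1.
case: ifP => _ e; apply: hweight_trsq_count.
- exact: dvdn_sub.
- by rewrite e mulnBr; lia.
- exact: dvdn_add.
- by rewrite mulnDr; lia.
Qed.

Lemma hweight_gt0 x : x != 0 -> (0 < wt x)%N.
Proof.
have pos2p : (0 < 2 * p)%N by rewrite muln_gt0 (prime_gt0 p_prime).
have [m_odd | m_even] := boolP (odd m); move=> x0.
  rewrite hweight_odd // -(ltn_pmul2l pos2p) muln0 divnK_weight ?dvdn_exp //.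
  by rewrite muln_gt0 subn_gt0 prime_gt1 // expn_gt0 prime_gt0.
have /andP [w1_gt0 lt_w12] := even_weights_lt p_prime p_odd m_gt0 m_even.
have [b wtE] := hweight_even m_even.
by rewrite wtE //; case: ifP => _ //; apply: ltn_trans lt_w12.
Qed.

End CodeOfSquares.

Local Close Scope ring_scope.

Theorem mainTheorem3 (F : finFieldType) (p m : nat) :
  prime p -> odd p -> p \in [pchar F]%R -> 0 < m -> #|F| = p ^ m ->
  #|nzsquares F| = (p ^ m - 1) %/ 2 /\
  #|code_D p m (nzsquares F)| = p ^ m /\
  (odd m ->
     nz_weights (nzsquares F) (code_D p m (nzsquares F))
       =i [:: (p - 1) * p ^ m %/ (2 * p)]) /\
  (~~ odd m ->
     let s := p ^ (m %/ 2) in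
     let w1 := (p - 1) * (p ^ m - s) %/ (2 * p) in
     let w2 := (p - 1) * (p ^ m + s) %/ (2 * p) in
     nz_weights (nzsquares F) (code_D p m (nzsquares F)) =i [:: w1; w2] /\
     w1 < w2 /\
     (forall i : nat,
        wcount (nzsquares F) (code_D p m (nzsquares F)) i =
          if i == 0 then 1
          else if i == w1 then (p ^ m - 1) %/ 2
          else if i == w2 then (p ^ m - 1) %/ 2
          else 0)).
Proof.
move=> p_prime p_odd pF m_gt0 cardF.
have two_neq0 := two_neq0_pchar pF p_odd.
have wt_gt0 := hweight_gt0 pF p_odd m_gt0 cardF.
have cardS : #|nzsquares F| = (p ^ m - 1) %/ 2.
  by rewrite subn1 -cardF -(double_card_nzsquares two_neq0) mulKn.
split; first exact: cardS.
split; first by rewrite card_code_D // cardF.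
split=> [m_odd w | m_even /=].
  rewrite nz_weights_code_D // inE; apply/existsP/eqP => [[x /andP [x0 /eqP <-]] | ->].
    exact: hweight_odd.
  by exists 1%R; rewrite oner_neq0 (hweight_odd pF p_odd m_gt0 cardF m_odd) ?oner_neq0 ?eqxx.
have [b wtE] := hweight_even pF p_odd m_gt0 cardF m_even.
have /andP [w1_gt0 lt_w12] := even_weights_lt p_prime p_odd m_gt0 m_even.
have wt0 := hweight0 m (nzsquares F) pF.
split; first by move=> w; rewrite nz_weights_code_D // (two_class_nz_weights two_neq0 wtE).
split=> // i; rewrite wcount_code_D // (card_two_class_fiber two_neq0 wt0 w1_gt0 lt_w12 wtE).
by rewrite -cardS.
Qed.
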